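(* Let $(F_n)_{n\ge0}$ be the Fibonacci numbers, $F_0=0$, $F_1=F_2=1$, $F_{n+2}=F_{n+1}+F_n$. Then for every $n\ge1$, $$F_{2n-1}F_{(n+1)^2}=F_{2n}\left(F_{2n+1}+F_{2n-1}\right)F_{n^2}+F_{2n+1}\left(F_{2n-1}F_{2n+1}-F_{2n}^2\right)F_{(n-1)^2}.$$ *)

From Stdlib Require Import ZArith Arith Lia.

Fixpoint fib (n : nat) : nat :=
  match n with
  | 0 => 0
  | S m => match m with
           | 0 => 1
           | S k => fib m + fib k
           end
  end.

Definition F (n : nat) : Z := Z.of_nat (fib n).

(* The identity is a special case of a three-term relation valid for every
   index shift m and step p:

     F p * F (m + 2p + 2)
       = F (p+1) (F (p+2) + F p) F (m + p)
         + F (p+2) (F p F (p+2) - F (p+1)^2) F m.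

   Taking p = 2n - 1 and m = (n-1)^2 gives m + p = n^2 and
   m + 2p + 2 = (n+1)^2, which is the theorem.

   The relation follows from the addition formula
     F (m + j + 1) = F (m+1) F (j+1) + F m F j,
   which is proved by induction on j.  Expanding F (m + p) and F (m + 2p + 2)
   by this formula, and F (2p + 1), F (2p + 2) by its doubling instances,
   leaves a polynomial identity in F m, F (m+1), F (p-1) and F p. *)

From Stdlib Require Import ZArith Arith Lia.
Open Scope Z_scope.

Lemma F_SS (m : nat) : F (S (S m)) = F (S m) + F m.
Proof. unfold F. change (fib (S (S m))) with (fib (S m) + fib m)%nat. lia. Qed.

Lemma F_add (m j : nat) : F (m + j + 1) = F (m + 1) * F (j + 1) + F m * F j.
Proof.
  revert m; induction j as [|j IH]; intro m.
  - rewrite Nat.add_0_r. change (F (0 + 1)) with 1. change (F 0) with 0. ring.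
  -
    replace (m + S j + 1)%nat with (m + 1 + j + 1)%nat by lia.
    rewrite IH.
    replace (m + 1 + 1)%nat with (S (S m)) by lia.
    replace (S j + 1)%nat with (S (S j)) by lia.
    rewrite !F_SS.
    replace (m + 1)%nat with (S m) by lia.
    replace (j + 1)%nat with (S j) by lia.
    ring.
Qed.

Lemma F_three_term (m p : nat) :
  F p * F (m + 2 * p + 2)
  = F (p + 1) * (F (p + 2) + F p) * F (m + p)
    + F (p + 2) * (F p * F (p + 2) - F (p + 1) * F (p + 1)) * F m.
Proof.
  destruct p as [|j].
  - (* p = 0: both sides vanish, the right one since F 1 = F 2. *)
    change (F 0) with 0. change (F (0 + 1)) with 1. change (F (0 + 2)) with 1.
    rewrite !Nat.add_0_r. ring.
  -
    replace (m + S j)%nat with (m + j + 1)%nat by lia.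
    replace (m + 2 * S j + 2)%nat with (m + (2 * j + 3) + 1)%nat by lia.
    rewrite (F_add m (2 * j + 3)), (F_add m j).
    assert (F_even_double : F (2 * j + 3 + 1) = F (j + 1 + 1) * F (j + 2 + 1)
                                     + F (j + 1) * F (j + 2)).
    { replace (2 * j + 3 + 1)%nat with (j + 1 + (j + 2) + 1)%nat by lia.
      apply F_add. }
    assert (F_odd_double : F (2 * j + 3) = F (j + 1 + 1) * F (j + 1 + 1)
                                 + F (j + 1) * F (j + 1)).
    { replace (2 * j + 3)%nat with (j + 1 + (j + 1) + 1)%nat by lia.
      apply F_add. }
    rewrite F_even_double, F_odd_double.
    replace (j + 2 + 1)%nat with (S (S (S j))) by lia.
    replace (S j + 2)%nat with (S (S (S j))) by lia.
    replace (j + 1 + 1)%nat with (S (S j)) by lia.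
    replace (S j + 1)%nat with (S (S j)) by lia.
    replace (j + 2)%nat with (S (S j)) by lia.
    replace (j + 1)%nat with (S j) by lia.
    rewrite !F_SS.
    ring.
Qed.

Theorem mainTheorem8 (n : nat) (hn : (1 <= n)%nat) :
  F (2 * n - 1) * F ((n + 1) * (n + 1))
  = F (2 * n) * (F (2 * n + 1) + F (2 * n - 1)) * F (n * n)
    + F (2 * n + 1) * (F (2 * n - 1) * F (2 * n + 1) - F (2 * n) * F (2 * n))
      * F ((n - 1) * (n - 1)).
Proof.
  pose proof (F_three_term ((n - 1) * (n - 1)) (2 * n - 1)) as key.
  replace (2 * n - 1 + 1)%nat with (2 * n)%nat in key by lia.
  replace (2 * n - 1 + 2)%nat with (2 * n + 1)%nat in key by lia.
  replace ((n - 1) * (n - 1) + (2 * n - 1))%nat with (n * n)%nat in key by nia.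
  replace ((n - 1) * (n - 1) + 2 * (2 * n - 1) + 2)%nat
    with ((n + 1) * (n + 1))%nat in key by nia.
  exact key.
Qed.
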